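(* Let $1\le b<\frac{n}{2}-1$ and let $T$ be a tree attaining the maximum value of $M_2$ over $\mathcal{CT}^*_{n,b}$. Then $T$ has at least one vertex of degree $4$, and the subgraph of $T$ induced by the vertices of degree $4$ is a tree.
   Context: A chemical tree is a tree with maximum degree at most $4$. A branching vertex is a vertex of degree greater than $2$. $\mathcal{CT}^*_{n,b}$ is the class of all $n$-vertex chemical trees with exactly $b$ branching vertices. $M_2(G)=\sum_{uv\in E(G)}d_ud_v$, where $d_v$ is the degree of $v$. *)

From mathcomp Require Import all_boot.
Set Implicit Arguments. Unset Strict Implicit. Unset Printing Implicit Defensive.

Section Graphs.
Variable n : nat.

Definition simple_graph (e : rel 'I_n) : Prop :=
  symmetric e /\ irreflexive e.

Definition deg (e : rel 'I_n) (v : 'I_n) : nat := #|[set u | e v u]|.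

Definition edges_in (e : rel 'I_n) (S : {set 'I_n}) : {set 'I_n * 'I_n} :=
  [set p : 'I_n * 'I_n | [&& p.1 < p.2, e p.1 p.2, p.1 \in S & p.2 \in S]].

Definition induced_tree (e : rel 'I_n) (S : {set 'I_n}) : Prop :=
  S != set0 /\
  (forall u v, u \in S -> v \in S ->
     connect (fun x y => [&& e x y, x \in S & y \in S]) u v) /\
  #|edges_in e S| = #|S| - 1.

Definition is_tree (e : rel 'I_n) : Prop :=
  simple_graph e /\ induced_tree e [set: 'I_n].

Definition chemical_tree (e : rel 'I_n) : Prop :=
  is_tree e /\ forall v, deg e v <= 4.

Definition nbranching (e : rel 'I_n) : nat := #|[set v | 2 < deg e v]|.

Definition in_CTstar (b : nat) (e : rel 'I_n) : Prop :=
  chemical_tree e /\ nbranching e = b.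

Definition M2 (e : rel 'I_n) : nat :=
  \sum_(p in edges_in e [set: 'I_n]) deg e p.1 * deg e p.2.

End Graphs.

From mathcomp Require Import all_boot zify.
Set Implicit Arguments. Unset Strict Implicit. Unset Printing Implicit Defensive.

(* Let N_i be the number of vertices of degree i and m_ij the number of edges joining a
   vertex of degree i to one of degree j.  For a chemical tree, M2 and the handshake
   relations are linear in these counts, and the tree structure adds linear constraints:
   a vertex set S induces at most |S| - 1 edges, and at most |S| - 2 if the induced
   subgraph is disconnected, and no edge joins two leaves.  Linear arithmetic then shows
   that if N_4 = 0, or if the degree-4 vertices induce a disconnected subgraph, M2 is
   strictly smaller than for an explicit tree of CT*_{n,b}: b vertices of degree 4 carrying
   pendant paths when n >= 3b + 2, and otherwise n - 2b - 2 vertices of degree 4 and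
   3b + 2 - n of degree 3 with no vertex of degree 2.  Hence at a maximum N_4 >= 1 and
   the degree-4 vertices induce a connected subgraph with exactly N_4 - 1 edges. *)

Lemma sum_nat_indicator_itv a b c d : a <= b ->
  \sum_(a <= i < b) ((c <= i) && (i < d)) = minn b d - maxn a c.
Proof.
elim: b => [|b IH] ab; first by rewrite big_geq //; lia.
have [ab_le|ba] := leqP a b; last by rewrite big_geq //; lia.
by rewrite big_nat_recr //= IH //; lia.
Qed.

Lemma sum_nat_indicator_ltn a b d : a <= b -> \sum_(a <= i < b) (i < d) = minn b d - a.
Proof. by move=> ab; rewrite -{2}[a]maxn0 -sum_nat_indicator_itv. Qed.

Lemma sum_delta_mul m x (F : nat -> nat) : x < m -> \sum_(i < m) (x == i) * F i = F x.
Proof.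
move=> xm; rewrite (bigD1 (Ordinal xm)) //= eqxx mul1n big1 ?addn0 // => i ix.
by move: ix; rewrite -val_eqE /= eq_sym => /negbTE ->.
Qed.

Lemma card_set_sum_nat (T : finType) (P : pred T) : #|[set v | P v]| = \sum_(v : T) P v.
Proof. by rewrite -sum1dep_card big_mkcond; apply: eq_bigr => v _; case: (P v). Qed.

Section ParentTree.
Variables (n' : nat) (p : nat -> nat).
Local Notation n := n'.+1.
Hypothesis p_lt : forall i, 0 < i < n -> p i < i.

Definition parent_tree : rel 'I_n :=
  fun x y => (0 < x) && (val y == p x) || (0 < y) && (val x == p y).

Definition parent_deg (v : nat) := (0 < v) + \sum_(0 <= i < n) ((0 < i) && (p i == v)).

Lemma parent_ltn (i : 'I_n) : 0 < i -> p i < n.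
Proof. by move=> i0; apply: ltn_trans (ltn_ord i); apply: p_lt; rewrite i0 /=. Qed.

Lemma parent_tree_sym : symmetric parent_tree.
Proof. by move=> x y; rewrite /parent_tree orbC. Qed.

Lemma parent_tree_irr : irreflexive parent_tree.
Proof.
move=> x; rewrite /parent_tree orbb; apply/negP => /andP [x0 /eqP px].
by have := p_lt (i := x); rewrite x0 ltn_ord -px ltnn => /(_ isT).
Qed.

Lemma parent_tree_connect_root (u : 'I_n) : connect parent_tree u ord0.
Proof.
suff H m (v : 'I_n) : v <= m -> connect parent_tree v ord0 by exact: H u (leqnn u).
elim: m v => [|m IH] v vm.
  by have -> : v = ord0 by apply: val_inj; apply/eqP; rewrite -leqn0.
have [v0|v_gt0] := posnP v; first by have -> : v = ord0 by apply: val_inj.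
apply: (connect_trans (y := inord (p v))).
  by apply: connect1; rewrite /parent_tree v_gt0 /= inordK ?parent_ltn // eqxx.
apply: IH; rewrite inordK ?parent_ltn // -ltnS.
by apply: leq_trans vm; apply: p_lt; rewrite v_gt0 ltn_ord.
Qed.

Definition parent_edge (i : 'I_n) : 'I_n * 'I_n := (inord (p i), i).

Lemma parent_edge_inj : injective parent_edge.
Proof. by move=> i j [_ ->]. Qed.

Lemma edges_parent_tree :
  edges_in parent_tree [set: 'I_n] = parent_edge @: [set i : 'I_n | 0 < i].
Proof.
apply/setP => -[x y]; rewrite inE /= !in_setT !andbT; apply/idP/imsetP.
  case/andP => xy /orP [/andP [x0 /eqP yx]|/andP [y0 /eqP xy']].
    by have := p_lt (i := x); rewrite x0 ltn_ord -yx => /(_ isT); rewrite ltnNge ltnW.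
  exists y; rewrite ?inE //; congr pair; apply: val_inj.
  by rewrite /= inordK -xy' ?ltn_ord.
case=> i; rewrite inE => i0 [-> ->].
have pi_lt : p i < i by apply: p_lt; rewrite i0 ltn_ord.
by rewrite /parent_tree /= !inordK ?parent_ltn // pi_lt i0 eqxx orbT.
Qed.

Lemma parent_tree_is_tree : is_tree parent_tree.
Proof.
split; first by split; [exact: parent_tree_sym | exact: parent_tree_irr].
split; first by apply/set0Pn; exists ord0.
split.
  move=> u v _ _; rewrite (@eq_connect _ _ parent_tree); last first.
    by move=> x y; rewrite !in_setT !andbT.
  apply: connect_trans (parent_tree_connect_root u) _.
  by rewrite (sym_connect_sym parent_tree_sym); apply: parent_tree_connect_root.
rewrite edges_parent_tree card_imset; last exact: parent_edge_inj.
have -> : [set i : 'I_n | 0 < i] = ~: [set ord0] by apply/setP => i; rewrite !inE lt0n.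
by rewrite cardsC1 cardsT card_ord subn1.
Qed.

Lemma deg_parent_tree (v : 'I_n) : deg parent_tree v = parent_deg v.
Proof.
rewrite /deg card_set_sum_nat /parent_deg.
transitivity (\sum_(u : 'I_n) (((0 < v) && (val u == p v)) + ((0 < u) && (p u == v)))).
  apply: eq_bigr => u _; rewrite /parent_tree [val v == _]eq_sym.
  case: andP => [[v0 /eqP uv]|_]; case: andP => [[u0 /eqP vu]|_] //.
  have pv : p v < v by apply: p_lt; rewrite v0 ltn_ord.
  have pu : p u < u by apply: p_lt; rewrite u0 ltn_ord.
  by move: pv pu; rewrite -uv vu => /ltn_trans h /h; rewrite ltnn.
rewrite big_split /= big_mkord; congr addn.
have [->|v0] := posnP v; first by rewrite big1.
rewrite -[RHS](sum_delta_mul (fun _ => 1) (parent_ltn v0)); apply: eq_bigr => i _.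
by rewrite muln1 eq_sym.
Qed.

Lemma M2_parent_tree : M2 parent_tree = \sum_(1 <= i < n) parent_deg i * parent_deg (p i).
Proof.
rewrite /M2 edges_parent_tree big_imset /=; last by move=> ? ? _ _; apply: parent_edge_inj.
transitivity (\sum_(i : 'I_n | 0 < i) parent_deg i * parent_deg (p i)).
  apply: eq_big => i; first by rewrite inE.
  by rewrite inE => i0; rewrite !deg_parent_tree /= inordK ?parent_ltn // mulnC.
rewrite big_mkcond /=.
rewrite -(big_mkord xpredT (fun i => if 0 < i then parent_deg i * parent_deg (p i) else 0)).
rewrite big_ltn //=.
by apply: eq_big_nat => i /andP [-> _].
Qed.

End ParentTree.

(* On [0, 3k+2), i |-> (i - 2) / 3 gives 0 the children 1..4 and every 0 < v < k the
   children 3v+2, 3v+3, 3v+4. *)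
Lemma ternary_children k v : 0 < k ->
  \sum_(0 <= i < 3 * k + 2) ((0 < i) && ((i - 2) %/ 3 == v)) = if v < k then 3 + (v == 0) else 0.
Proof.
move=> k0; rewrite (eq_big_nat _ _ (F2 := fun i => nat_of_bool
  (((if v == 0 then 1 else 3 * v + 2) <= i) && (i < 3 * v + 5)))); last first.
  by move=> i _; congr nat_of_bool; apply/idP/idP; case: (v =P 0) => ? /=; lia.
by rewrite sum_nat_indicator_itv //; case: (v =P 0) => ?; case: (ltnP v k) => ? /=; lia.
Qed.

Definition M2_pendant n b :=
  16 * (b - 1) + 8 * (b + 1) + 4 * (minn (3 * b + 2) (n - (2 * b + 2)) - b)
  + 2 * (n - (3 * b + 2)) + 2 * (n - (5 * b + 4)).

Section PendantPaths.
Variables (n' b : nat).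
Local Notation n := n'.+1.
Hypotheses (b_gt0 : 0 < b) (b_small : 3 * b + 2 <= n).

(* Vertices 0, ..., b-1 have degree 4; the leaves b, ..., 3b+1 of this ternary part
   are then continued into 2b+2 paths. *)
Definition pendant_parent i := if i < 3 * b + 2 then (i - 2) %/ 3 else i - (2 * b + 2).

Lemma pendant_parent_lt i : 0 < i < n -> pendant_parent i < i.
Proof. by rewrite /pendant_parent; case: ifP; lia. Qed.

Lemma parent_deg_pendant v : v < n ->
  parent_deg n' pendant_parent v = if v < b then 4 else 1 + (v + 2 * b + 2 < n).
Proof.
move=> vn; rewrite /parent_deg (@big_cat_nat _ _ _ (3 * b + 2)) //=.
rewrite (eq_big_nat _ _ (m := 0) (F2 := fun i => nat_of_bool ((0 < i) && ((i - 2) %/ 3 == v)))); last first.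
  by move=> i /andP [_ ilt]; rewrite /pendant_parent ilt.
rewrite (eq_big_nat _ _ (m := 3 * b + 2)
  (F2 := fun i => nat_of_bool ((v + 2 * b + 2 <= i) && (i < v + 2 * b + 3)))); last first.
  move=> i /andP [ige _]; rewrite /pendant_parent [i < _]ltnNge ige /=.
  by congr nat_of_bool; apply/idP/idP; lia.
rewrite ternary_children // sum_nat_indicator_itv //.
by case: (v =P 0) => ?; case: (ltnP v b) => ?; case: (ltnP (v + 2 * b + 2) n) => ? /=; lia.
Qed.

Local Notation D := (parent_deg n' pendant_parent).

Lemma parent_deg_pendant_lt v : v < b -> D v = 4.
Proof. by move=> vb; rewrite parent_deg_pendant ?ifT //; lia. Qed.

Lemma parent_deg_pendant_ge v : b <= v < n -> D v = 1 + (v + 2 * b + 2 < n).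
Proof. by case/andP=> bv vn; rewrite parent_deg_pendant // ifN // -leqNgt. Qed.

Lemma M2_pendant_tree : M2 (@parent_tree n' pendant_parent) = M2_pendant n b.
Proof.
rewrite (M2_parent_tree pendant_parent_lt) (@big_cat_nat _ _ _ b) //; last lia.
rewrite (@big_cat_nat _ _ _ (3 * b + 2) b n) //; last lia.
rewrite (eq_big_nat _ _ (m := 1) (F2 := fun _ => 16)); last first.
  move=> i /andP [_ ib]; have pi : pendant_parent i < b by rewrite /pendant_parent ifT; lia.
  by rewrite (parent_deg_pendant_lt ib) (parent_deg_pendant_lt pi).
rewrite (eq_big_nat _ _ (m := b) (F2 := fun i => 4 + 4 * (i < n - (2 * b + 2)))); last first.
  move=> i /andP [bi ib]; have pi : pendant_parent i < b by rewrite /pendant_parent ib; lia.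
  by rewrite (parent_deg_pendant_lt pi) parent_deg_pendant_ge; lia.
rewrite (eq_big_nat _ _ (m := 3 * b + 2) (F2 := fun i => 2 + 2 * (i < n - (2 * b + 2)))); last first.
  move=> i /andP [bi ib]; have pi : pendant_parent i = i - (2 * b + 2).
    by rewrite /pendant_parent ltnNge bi.
  by rewrite pi !parent_deg_pendant_ge; lia.
rewrite !big_split /= !sum_nat_const_nat !sum_nat_indicator_ltn; try lia.
by rewrite /M2_pendant; lia.
Qed.

Lemma pendant_tree_in_CTstar : in_CTstar b (@parent_tree n' pendant_parent).
Proof.
have degE v : deg (parent_tree pendant_parent) v = D v := deg_parent_tree pendant_parent_lt v.
split; first split; first exact: parent_tree_is_tree pendant_parent_lt.
  by move=> v; rewrite degE parent_deg_pendant //; case: ifP => //; lia.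
rewrite /nbranching card_set_sum_nat (eq_bigr (fun v : 'I_n => nat_of_bool (v < b))).
  by rewrite -(big_mkord xpredT (fun v => nat_of_bool (v < b))) sum_nat_indicator_ltn //; lia.
by move=> v _; rewrite degE parent_deg_pendant //; case: ifP => //; lia.
Qed.

End PendantPaths.

Definition M2_irreducible k j :=
  16 * (k - 1) + 8 * (k + 1) + 8 * minn (2 * k + 2) j + 6 * j + 6 * (j - (2 * k + 2)).

Section IrreducibleTree.
Variables (n' k j : nat).
Local Notation n := n'.+1.
Hypotheses (k_gt0 : 0 < k) (n_eq : n = 3 * k + 2 + 2 * j).

(* Vertices 0, ..., k-1 have degree 4 and k, ..., k+j-1 degree 3: vertex k+t receives
   the children 3k+2+2t and 3k+3+2t. *)
Definition irreducible_parent i :=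
  if i < 3 * k + 2 then (i - 2) %/ 3 else k + (i - (3 * k + 2)) %/ 2.

Lemma irreducible_parent_lt i : 0 < i < n -> irreducible_parent i < i.
Proof. by rewrite /irreducible_parent; case: ifP; lia. Qed.

Local Notation D := (parent_deg n' irreducible_parent).

Lemma parent_deg_irreducible v : v < n -> D v = if v < k then 4 else 1 + 2 * (v < k + j).
Proof.
move=> vn; have kn : 3 * k + 2 <= n by lia.
rewrite /parent_deg (@big_cat_nat _ _ _ (3 * k + 2)) //=.
rewrite (eq_big_nat _ _ (m := 0) (F2 := fun i => nat_of_bool ((0 < i) && ((i - 2) %/ 3 == v))));
  last by move=> i /andP [_ ilt]; rewrite /irreducible_parent ilt.
rewrite (eq_big_nat _ _ (m := 3 * k + 2)
  (F2 := fun i => nat_of_bool ((2 * v + k + 2 <= i) && (i < 2 * v + k + 4)))); last first.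
  move=> i /andP [ige _]; rewrite /irreducible_parent [i < _]ltnNge ige /=.
  by congr nat_of_bool; apply/idP/idP; lia.
rewrite ternary_children // sum_nat_indicator_itv //.
by case: (v =P 0) => ?; case: (ltnP v k) => ?; case: (ltnP v (k + j)) => ? /=; lia.
Qed.

Lemma parent_deg_irreducible_lt v : v < k -> D v = 4.
Proof. by move=> vk; rewrite parent_deg_irreducible ?ifT //; lia. Qed.

Lemma parent_deg_irreducible_ge v : k <= v < n -> D v = 1 + 2 * (v < k + j).
Proof. by case/andP=> kv vn; rewrite parent_deg_irreducible // ifN // -leqNgt. Qed.

Lemma M2_irreducible_tree : M2 (@parent_tree n' irreducible_parent) = M2_irreducible k j.
Proof.
rewrite (M2_parent_tree irreducible_parent_lt) (@big_cat_nat _ _ _ k) //; last lia.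
rewrite (@big_cat_nat _ _ _ (3 * k + 2) k n) //; try lia.
rewrite (eq_big_nat _ _ (m := 1) (F2 := fun _ => 16)); last first.
  move=> i /andP [_ ik]; have pi : irreducible_parent i < k.
    by rewrite /irreducible_parent ifT; lia.
  by rewrite (parent_deg_irreducible_lt ik) (parent_deg_irreducible_lt pi).
rewrite (eq_big_nat _ _ (m := k) (F2 := fun i => 4 + 8 * (i < k + j))); last first.
  move=> i /andP [ki ik]; have pi : irreducible_parent i < k.
    by rewrite /irreducible_parent ik; lia.
  by rewrite (parent_deg_irreducible_lt pi) parent_deg_irreducible_ge; lia.
rewrite (eq_big_nat _ _ (m := 3 * k + 2) (F2 := fun i => 3 + 6 * (i < k + j))); last first.
  move=> i /andP [ki ik]; have pi : irreducible_parent i = k + (i - (3 * k + 2)) %/ 2.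
    by rewrite /irreducible_parent ltnNge ki.
  by rewrite pi !parent_deg_irreducible_ge; lia.
rewrite !big_split /= !sum_nat_const_nat !sum_nat_indicator_ltn; try lia.
by rewrite /M2_irreducible; lia.
Qed.

Lemma irreducible_tree_in_CTstar : in_CTstar (k + j) (@parent_tree n' irreducible_parent).
Proof.
have degE v : deg (parent_tree irreducible_parent) v = D v :=
  deg_parent_tree irreducible_parent_lt v.
split; first split; first exact: parent_tree_is_tree irreducible_parent_lt.
  by move=> v; rewrite degE parent_deg_irreducible //; case: ifP => //; lia.
rewrite /nbranching card_set_sum_nat (eq_bigr (fun v : 'I_n => nat_of_bool (v < k + j))).
  by rewrite -(big_mkord xpredT (fun v => nat_of_bool (v < k + j))) sum_nat_indicator_ltn //; lia.
by move=> v _; rewrite degE parent_deg_irreducible //; case: ifP => ?; lia.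
Qed.

End IrreducibleTree.

Definition M2_extremal n b :=
  if 3 * b + 2 <= n then M2_pendant n b
  else M2_irreducible (n - (2 * b + 2)) (3 * b + 2 - n).

Lemma exists_CTstar_M2_extremal n b : 0 < b -> 2 * b + 2 < n ->
  exists2 e : rel 'I_n, in_CTstar b e & M2 e = M2_extremal n b.
Proof.
case: n => [//|n'] b_gt0 bn; rewrite /M2_extremal; case: ifP => small.
  exists (parent_tree (pendant_parent b)).
    exact: pendant_tree_in_CTstar.
  exact: M2_pendant_tree.
have k_gt0 : 0 < n'.+1 - (2 * b + 2) by lia.
have n_eq : n'.+1 = 3 * (n'.+1 - (2 * b + 2)) + 2 + 2 * (3 * b + 2 - n'.+1) by lia.
exists (parent_tree (irreducible_parent (n'.+1 - (2 * b + 2)))); last first.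
  exact: M2_irreducible_tree.
by have := irreducible_tree_in_CTstar k_gt0 n_eq; rewrite (_ : _ + _ = b) //; lia.
Qed.

Lemma edges_inS n (e : rel 'I_n) (A B : {set 'I_n}) :
  A \subset B -> edges_in e A \subset edges_in e B.
Proof.
move=> /subsetP AB; apply/subsetP => -[x y]; rewrite !inE /=.
by case/and4P=> -> -> /AB -> /AB ->.
Qed.

Section Tree.
Variables (n : nat) (e : rel 'I_n).
Hypothesis tree : is_tree e.

Lemma tree_sym : symmetric e. Proof. by case: tree => [[]]. Qed.

Lemma tree_irr : irreflexive e. Proof. by case: tree => [[]]. Qed.

Lemma tree_connect u v : connect e u v.
Proof.
case: tree => _ [_ [conn _]]; have := conn u v (in_setT u) (in_setT v).
by rewrite (@eq_connect _ _ e) // => x y; rewrite !in_setT !andbT.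
Qed.

Lemma card_edges_tree : #|edges_in e [set: 'I_n]| = n - 1.
Proof. by case: tree => _ [_ [_ ->]]; rewrite cardsT card_ord. Qed.

Lemma tree_closed_setT (C : {set 'I_n}) :
  C != set0 -> (forall x y, e x y -> x \in C -> y \in C) -> C = [set: 'I_n].
Proof.
case/set0Pn=> c cC closedC; apply/setP => v; rewrite in_setT.
have closed_e : closed e (mem C).
  by move=> x y exy; apply/idP/idP; apply: closedC; rewrite // tree_sym.
by rewrite -(closed_connect closed_e (tree_connect c v)).
Qed.

Lemma tree_cut_edge (C : {set 'I_n}) : C != set0 -> C != [set: 'I_n] ->
  exists v c, [/\ v \notin C, c \in C & e v c].
Proof.
move=> C0 CT.
have [/existsP [v /existsP [c /and3P [vC cC evc]]]|no_cut] :=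
  boolP [exists v, exists c, [&& v \notin C, c \in C & e v c]].
  by exists v, c.
case/negP: CT; apply/eqP/tree_closed_setT => // x y exy xC.
apply: contraNT no_cut => yC; apply/existsP; exists y; apply/existsP; exists x.
by rewrite yC xC tree_sym exy.
Qed.

Lemma card_edges_in_setU1 (C : {set 'I_n}) v c : v \notin C -> c \in C -> e v c ->
  #|edges_in e C| < #|edges_in e (v |: C)|.
Proof.
move=> vC cC evc; apply: proper_card; rewrite properE edges_inS ?subsetUr //=.
have [vc|vc|/val_inj vc] := ltngtP v c; last by move: vC; rewrite vc cC.
- apply/subsetPn; exists (v, c); first by rewrite !inE /= vc evc eqxx cC orbT.
  by rewrite inE /= (negbTE vC) !andbF.
- apply/subsetPn; exists (c, v); first by rewrite !inE /= vc tree_sym evc eqxx cC !orbT.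
  by rewrite inE /= (negbTE vC) !andbF.
Qed.

(* Induction on |~: C|: growing C along a cut edge adds at least one induced edge. *)
Lemma card_edges_in_setC (C : {set 'I_n}) : C != set0 -> #|edges_in e C| + #|~: C| <= n - 1.
Proof.
move=> C0; move: {2}#|~: C| (leqnn #|~: C|) => k; elim: k C C0 => [|k IH] C C0 Ck.
  move: Ck; rewrite leqn0 cards_eq0 => /eqP C'0.
  have -> : C = [set: 'I_n] by rewrite -[C]setCK C'0 setC0.
  by rewrite card_edges_tree setCT cards0 addn0.
have [->|CT] := eqVneq C [set: 'I_n]; first by rewrite card_edges_tree setCT cards0 addn0.
have [v [c [vC cC evc]]] := tree_cut_edge C0 CT.
have vC0 : v |: C != set0 by apply/set0Pn; exists v; rewrite setU11.
have := IH _ vC0; have := card_edges_in_setU1 vC cC evc; have := cardsD1 v (~: C).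
rewrite setCU setIC -setDE inE vC; lia.
Qed.

Lemma card_edges_in_leq (C : {set 'I_n}) : #|edges_in e C| <= #|C| - 1.
Proof.
have [->|C0] := eqVneq C set0.
  rewrite cards0 leqn0 cards_eq0; apply/eqP/setP => -[x y].
  by rewrite !inE /= !andbF.
by have := card_edges_in_setC C0; have := cardsC C; rewrite card_ord; lia.
Qed.

Lemma card_edges_in_disconnected (S : {set 'I_n}) u v : u \in S -> v \in S ->
  ~~ connect (fun x y => [&& e x y, x \in S & y \in S]) u v -> #|edges_in e S| + 2 <= #|S|.
Proof.
set R := fun x y => _; move=> uS vS uv.
pose A := [set x in S | connect R u x]; pose B := S :\: A.
have AS : A \subset S by apply/subsetP => x /setIdP [].
have A0 : A != set0 by apply/set0Pn; exists u; rewrite inE uS connect0.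
have B0 : B != set0 by apply/set0Pn; exists v; rewrite !inE vS uv.
have split_edges : edges_in e S \subset edges_in e A :|: edges_in e B.
  apply/subsetP => -[x y]; rewrite !inE /= => /and4P [xy exy xS yS].
  rewrite xy exy xS yS /=.
  have Rxy : R x y by rewrite /R exy xS yS.
  have Ryx : R y x by rewrite /R tree_sym exy xS yS.
  case ux: (connect R u x); first by rewrite (connect_trans ux (connect1 Rxy)).
  by case uy: (connect R u y) => //; rewrite (connect_trans uy (connect1 Ryx)) in ux.
have := subset_leq_card split_edges; rewrite cardsU.
have := card_edges_in_leq A; have := card_edges_in_leq B.
rewrite -!card_gt0 in A0 B0.
have := cardsD S A; rewrite -/B (setIidPr AS); have := subset_leq_card AS; lia.
Qed.

Lemma tree_deg_gt0 v : 1 < n -> 0 < deg e v.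
Proof.
move=> n_gt1; rewrite card_gt0; apply/set0Pn.
have [u evu|isolated] := pickP (e v); first by exists u; rewrite inE.
suff : [set v] = [set: 'I_n].
  by move=> vT; have := cards1 v; rewrite vT cardsT card_ord => n1; rewrite n1 in n_gt1.
apply: tree_closed_setT => [|x y exy]; first by apply/set0Pn; exists v; rewrite set11.
by rewrite inE => /eqP xv; rewrite xv isolated in exy.
Qed.

Lemma deg1_adj u v w : deg e u = 1 -> e u v -> e u w -> v = w.
Proof.
move=> /eqP/cards1P [z Nz] euv euw.
have : v \in [set z] by rewrite -Nz inE.
have : w \in [set z] by rewrite -Nz inE.
by rewrite !inE => /eqP -> /eqP ->.
Qed.

Lemma tree_leaves_not_adj u v : 2 < n -> e u v -> deg e u = 1 -> deg e v = 1 -> False.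
Proof.
move=> n_gt2 euv du dv; have evu : e v u by rewrite tree_sym.
suff uvT : [set u; v] = [set: 'I_n].
  by have := cards2 u v; rewrite uvT cardsT card_ord; case: (u != v) => /=; lia.
apply: tree_closed_setT => [|x y exy]; first by apply/set0Pn; exists u; rewrite !inE eqxx.
rewrite !inE => /orP [] /eqP xE; rewrite xE in exy.
  by rewrite (deg1_adj du exy euv) eqxx orbT.
by rewrite (deg1_adj dv exy evu) eqxx.
Qed.

End Tree.

Lemma double_sum_edges_in n (e : rel 'I_n) (C : {set 'I_n}) (w : 'I_n -> 'I_n -> nat) :
  symmetric e -> irreflexive e -> (forall u v, w u v = w v u) ->
  2 * \sum_(p in edges_in e C) w p.1 p.2 =
  \sum_u \sum_v [&& e u v, u \in C & v \in C] * w u v.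
Proof.
move=> e_sym e_irr w_sym.
pose S (r : rel 'I_n) := \sum_u \sum_v [&& r u v, e u v, u \in C & v \in C] * w u v.
have edgesE : \sum_(p in edges_in e C) w p.1 p.2 = S (fun u v => u < v).
  rewrite /S pair_bigA big_mkcond /=; apply: eq_bigr => -[u v] _ /=.
  by rewrite inE /=; case: ifP; rewrite ?mul1n ?mul0n.
have -> : \sum_u \sum_v [&& e u v, u \in C & v \in C] * w u v =
    S (fun u v => u < v) + S (fun u v => v < u).
  rewrite -big_split; apply: eq_bigr => u _; rewrite -big_split; apply: eq_bigr => v _ /=.
  by have [uv|vu|/val_inj ->] := ltngtP u v; rewrite ?addn0 ?e_irr.
have -> : S (fun u v => v < u) = S (fun u v => u < v).
  rewrite /S exchange_big; apply: eq_bigr => u _; apply: eq_bigr => v _ /=.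
  by rewrite e_sym w_sym [(v \in C) && _]andbC.
by rewrite -edgesE addnn mul2n.
Qed.

Section DegreeCounts.
Variables (n : nat) (e : rel 'I_n).
Hypotheses (tree : is_tree e) (chem : forall v, deg e v <= 4).

Definition deg_class i : {set 'I_n} := [set v | deg e v == i].

Definition nadj i j := \sum_u \sum_v [&& e u v, deg e u == i & deg e v == j].

Lemma deg_lt5 v : deg e v < 5. Proof. by rewrite ltnS chem. Qed.

Lemma sum_by_deg (F : 'I_n -> nat -> nat) :
  \sum_v F v (deg e v) = \sum_(i < 5) \sum_v (deg e v == i) * F v i.
Proof.
by rewrite exchange_big; apply: eq_bigr => v _; rewrite (sum_delta_mul (F v) (deg_lt5 v)).
Qed.

Lemma card_deg_class0 : 1 < n -> #|deg_class 0| = 0.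
Proof.
move=> n_gt1; apply/eqP; rewrite cards_eq0; apply/eqP/setP => v.
by rewrite !inE eqn0Ngt tree_deg_gt0.
Qed.

Lemma nadj_0 i : 1 < n -> nadj i 0 = 0.
Proof.
move=> n_gt1; apply: big1 => u _; apply: big1 => v _.
by rewrite eqn0Ngt tree_deg_gt0 ?andbF.
Qed.

Lemma nadj11 : 2 < n -> nadj 1 1 = 0.
Proof.
move=> n_gt2; apply: big1 => u _; apply: big1 => v _.
case: (boolP (e u v)) => //= euv; case: eqP => //= du; case: eqP => //= dv.
by case: (tree_leaves_not_adj tree n_gt2 euv du dv).
Qed.

Lemma nadjC i j : nadj i j = nadj j i.
Proof.
rewrite /nadj exchange_big; apply: eq_bigr => u _; apply: eq_bigr => v _.
by rewrite (tree_sym tree) [(deg e v == i) && _]andbC.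
Qed.

Lemma card_edges_in_pairs (C : {set 'I_n}) :
  2 * #|edges_in e C| = \sum_u \sum_v [&& e u v, u \in C & v \in C].
Proof.
rewrite -sum1_card (@double_sum_edges_in _ _ C (fun _ _ => 1) (tree_sym tree) (tree_irr tree)) //.
by apply: eq_bigr => u _; apply: eq_bigr => v _; rewrite muln1.
Qed.

Lemma nadj_diag i : nadj i i = 2 * #|edges_in e (deg_class i)|.
Proof.
by rewrite card_edges_in_pairs; apply: eq_bigr => u _; apply: eq_bigr => v _; rewrite !inE.
Qed.

Lemma deg_sum v : deg e v = \sum_u e v u.
Proof. exact: card_set_sum_nat. Qed.

Lemma sum_card_deg_class :
  1 < n -> #|deg_class 1| + #|deg_class 2| + #|deg_class 3| + #|deg_class 4| = n.
Proof.
move=> n_gt1; transitivity (\sum_(i < 5) #|deg_class i|).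
  by rewrite !big_ord_recr big_ord0 /= card_deg_class0.
transitivity (\sum_(v : 'I_n) 1); last by rewrite sum_nat_const card_ord muln1.
rewrite (sum_by_deg (fun _ _ => 1)); apply: eq_bigr => i _.
by rewrite card_set_sum_nat; apply: eq_bigr => v _; rewrite muln1.
Qed.

Lemma handshake :
  #|deg_class 1| + 2 * #|deg_class 2| + 3 * #|deg_class 3| + 4 * #|deg_class 4| = 2 * (n - 1).
Proof.
transitivity (\sum_(i < 5) i * #|deg_class i|).
  by rewrite !big_ord_recr big_ord0 /= mul1n.
rewrite -(card_edges_tree tree) card_edges_in_pairs.
transitivity (\sum_v deg e v).
  rewrite (sum_by_deg (fun _ i => i)); apply: eq_bigr => i _.
  by rewrite card_set_sum_nat big_distrr; apply: eq_bigr => v _; rewrite mulnC.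
apply: eq_bigr => u _; rewrite deg_sum.
by apply: eq_bigr => v _; rewrite !in_setT !andbT.
Qed.

Lemma sum_nadj i : 1 < n -> nadj i 1 + nadj i 2 + nadj i 3 + nadj i 4 = i * #|deg_class i|.
Proof.
move=> n_gt1; transitivity (\sum_(j < 5) nadj i j).
  by rewrite !big_ord_recr big_ord0 /= nadj_0.
rewrite card_set_sum_nat big_distrr /nadj exchange_big /=; apply: eq_bigr => u _.
rewrite exchange_big /= (eq_bigr (fun v => (deg e u == i) * e u v)) => [|v _].
  by rewrite -big_distrr -deg_sum /=; case: eqP => [->|_] /=; rewrite mulnC ?muln0.
rewrite -(sum_delta_mul (fun _ => (deg e u == i) * e u v) (deg_lt5 v)).
by apply: eq_bigr => j _; case: (e u v); case: (deg e u == i); case: (deg e v == j).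
Qed.

Lemma nbranching_deg_class : nbranching e = #|deg_class 3| + #|deg_class 4|.
Proof.
rewrite /nbranching !card_set_sum_nat -big_split; apply: eq_bigr => v _ /=.
by move: (deg_lt5 v); case: (deg e v) => [|[|[|[|[|]]]]].
Qed.

Lemma card_edges_in_branching : #|edges_in e [set v | 2 < deg e v]| =
  #|edges_in e (deg_class 3)| + nadj 3 4 + #|edges_in e (deg_class 4)|.
Proof.
have : nadj 3 3 + nadj 3 4 + nadj 4 3 + nadj 4 4 = 2 * #|edges_in e [set v | 2 < deg e v]|.
  rewrite card_edges_in_pairs /nadj -!big_split; apply: eq_bigr => u _.
  rewrite -!big_split; apply: eq_bigr => v _; rewrite !inE /=.
  move: (deg_lt5 u) (deg_lt5 v); case: (e u v) => //.
  by case: (deg e u) => [|[|[|[|[|]]]]] //; case: (deg e v) => [|[|[|[|[|]]]]].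
by rewrite (nadjC 4 3) !nadj_diag; lia.
Qed.

Lemma M2_nadj : 2 < n -> M2 e =
  2 * nadj 1 2 + 3 * nadj 1 3 + 4 * nadj 1 4 + 6 * nadj 2 3 + 8 * nadj 2 4 + 12 * nadj 3 4
  + 4 * #|edges_in e (deg_class 2)| + 9 * #|edges_in e (deg_class 3)|
  + 16 * #|edges_in e (deg_class 4)|.
Proof.
move=> n_gt2.
have twoM2 : 2 * M2 e = \sum_(i < 5) \sum_(j < 5) i * j * nadj i j.
  rewrite /M2 (@double_sum_edges_in _ _ _ (fun u v => deg e u * deg e v) (tree_sym tree)
    (tree_irr tree)) => [|u v]; last exact: mulnC.
  transitivity (\sum_u \sum_v \sum_(i < 5) \sum_(j < 5)
      i * j * [&& e u v, deg e u == i & deg e v == j]).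
    apply: eq_bigr => u _; apply: eq_bigr => v _; rewrite !in_setT !andbT.
    rewrite mulnC -(sum_delta_mul (fun i => i * deg e v * e u v) (deg_lt5 u)).
    apply: eq_bigr => i _.
    rewrite -(sum_delta_mul (fun j => (deg e u == i) * (i * j * e u v)) (deg_lt5 v)).
    apply: eq_bigr => j _.
    by case: (e u v); case: (deg e u == i); case: (deg e v == j); rewrite ?muln0 ?muln1 ?mul1n.
  rewrite /nadj; under eq_bigr do rewrite exchange_big /=.
  rewrite exchange_big /=; apply: eq_bigr => i _.
  under eq_bigr do rewrite exchange_big /=.
  rewrite exchange_big /=; apply: eq_bigr => j _.
  by rewrite big_distrr; apply: eq_bigr => u _; rewrite big_distrr.
rewrite !big_ord_recr !big_ord0 /= !nadj_0 ?(ltnW n_gt2) // nadj11 // !nadj_diag in twoM2.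
by rewrite (nadjC 2 1) (nadjC 3 1) (nadjC 4 1) (nadjC 3 2) (nadjC 4 2) (nadjC 4 3) in twoM2; lia.
Qed.

Lemma M2_lt_extremal b : 0 < b -> 2 * b + 2 < n -> nbranching e = b ->
  #|deg_class 4| = 0 \/ #|edges_in e (deg_class 4)| + 2 <= #|deg_class 4| ->
  M2 e < M2_extremal n b.
Proof.
move=> b_gt0 bn nb defect.
have n_gt2 : 2 < n by lia.
have vertices := sum_card_deg_class (ltnW n_gt2).
have degrees := handshake.
have row1 := sum_nadj 1 (ltnW n_gt2); have row2 := sum_nadj 2 (ltnW n_gt2).
have row3 := sum_nadj 3 (ltnW n_gt2); have row4 := sum_nadj 4 (ltnW n_gt2).
rewrite nadj11 // !nadj_diag in row1 row2 row3 row4.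
rewrite (nadjC 2 1) (nadjC 3 1) (nadjC 4 1) (nadjC 3 2) (nadjC 4 2) (nadjC 4 3) in row2 row3 row4.
have M2E := M2_nadj n_gt2.
have branching := nbranching_deg_class; rewrite nb in branching.
have forest3 := card_edges_in_leq tree (deg_class 3).
have forest4 := card_edges_in_leq tree (deg_class 4).
have forestb := card_edges_in_leq tree [set v | 2 < deg e v].
rewrite card_edges_in_branching -/(nbranching e) nb in forestb.
rewrite /M2_extremal /M2_pendant /M2_irreducible; case: (leqP (3 * b + 2) n) => small /=; lia.
Qed.

End DegreeCounts.

Theorem lemma14 (n b : nat) (e : rel 'I_n) :
  1 <= b -> 2 * b + 2 < n ->
  in_CTstar b e ->
  (forall e' : rel 'I_n, in_CTstar b e' -> M2 e' <= M2 e) ->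
  (exists v : 'I_n, deg e v = 4) /\
  induced_tree e [set v | deg e v == 4].
Proof.
move=> b_gt0 bn [[tree chem] nb] M2_max.
have [e' e'_CT M2e'] := exists_CTstar_M2_extremal b_gt0 bn.
have no_defect : ~ (#|deg_class e 4| = 0 \/ #|edges_in e (deg_class e 4)| + 2 <= #|deg_class e 4|).
  by move/(M2_lt_extremal tree chem b_gt0 bn nb); rewrite -M2e' ltnNge M2_max.
have deg4_gt0 : 0 < #|deg_class e 4| by rewrite lt0n; apply/eqP => N0; apply: no_defect; left.
have [v] := card_gt0P deg4_gt0; rewrite inE => /eqP v4.
split; first by exists v.
split; first by apply/set0Pn; exists v; rewrite inE v4.
split.
  move=> x y xS yS; apply: contraT => nxy; case: no_defect; right.
  by have := card_edges_in_disconnected tree xS yS nxy.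
have := card_edges_in_leq tree (deg_class e 4); move: no_defect; rewrite /deg_class; lia.
Qed.
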